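(* Let $0<b<1$, $\alpha\in(0,1]$ and $a=b^{\alpha}$. Every $I_0$-valued (discrete) semi-stable$(a,b)$ law is discrete semi-selfdecomposable$(b)$.
   Context: $I_0=\{0,1,2,\dots\}$. An $I_0$-valued random variable with probability generating function (PGF) $P(s)$ is discrete semi-stable$(a,b)$ if $P(s)\neq 0$ and $\{P(s)\}^a=P(1-b+bs)$ for all $0\le s\le 1$, where $0<b<1$ and $b=a^{1/\alpha}$ for some $\alpha\in(0,1]$. An $I_0$-valued random variable with PGF $P(s)$ is discrete semi-selfdecomposable$(b)$ ($0<b<1$) if there exists an infinitely divisible PGF $P_0(s)$ such that $P(s)=P(1-b+bs)\,P_0(s)$ for all $0\le s\le 1$. *)

From Stdlib Require Import Reals.
From Coquelicot Require Import Coquelicot.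
Open Scope R_scope.

(* A probability law on I_0 = {0,1,2,...}, given by its probability mass
   function p : nat -> R (p n = P(X = n)). *)
Definition pmf_I0 (p : nat -> R) : Prop :=
  (forall n, 0 <= p n) /\ is_series p 1.

Definition pgf (p : nat -> R) (s : R) : R :=
  Series (fun n => p n * s ^ n).

Definition inf_div_pmf (p0 : nat -> R) : Prop :=
  pmf_I0 p0 /\
  forall n : nat, (1 <= n)%nat ->
    exists q : nat -> R, pmf_I0 q /\
      forall s, 0 <= s <= 1 -> (pgf q s) ^ n = pgf p0 s.

Definition disc_semi_stable (a b : R) (p : nat -> R) : Prop :=
  pmf_I0 p /\
  forall s, 0 <= s <= 1 ->
    pgf p s <> 0 /\ Rpower (pgf p s) a = pgf p (1 - b + b * s).

Definition disc_semi_selfdecomp (b : R) (p : nat -> R) : Prop :=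
  pmf_I0 p /\
  exists p0 : nat -> R, inf_div_pmf p0 /\
    forall s, 0 <= s <= 1 -> pgf p s = pgf p (1 - b + b * s) * pgf p0 s.

From Stdlib Require Import Reals Lra Lia.
From Coquelicot Require Import Coquelicot.
Open Scope R_scope.

(* Write P for the PGF of p and r for the coefficients of P'/P.  For t >= 0 the
   formal power P^t has coefficients p_0^t d_t, where d_t solves d_t' = t r d_t,
   d_t(0) = 1; hence P^(t+t') = P^t P^t' and P^1 = P.  Iterating semi-stability
   gives P(s)^(a^n) = P(1 - b^n + b^n s), the PGF of a binomial thinning, so
   P^(a^n) has nonnegative coefficients.  Since the coefficient of s^(k+1) in
   P^t / p_0^t is t/(k+1) times a quantity tending to r_k as t -> 0 (once
   r_0, ..., r_(k-1) >= 0), letting n -> oo gives r >= 0.  Then every P^t,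
   0 <= t <= 1, is a PGF, and P(s) = P(s)^a P(s)^(1-a) = P(1 - b + b s) P_0(s)
   with P_0 = P^(1-a) = (P^((1-a)/n))^n infinitely divisible. *)

Section StrongRecursion.

Variable F : nat -> (nat -> R) -> R.

Fixpoint strong_rec_table (n : nat) : nat -> R :=
  match n with
  | O => fun _ => F O (fun _ => 0)
  | S m => fun i => if Nat.leb i m then strong_rec_table m i
                    else F (S m) (strong_rec_table m)
  end.

Definition strong_rec (k : nat) : R := strong_rec_table k k.

Lemma strong_rec_table_stable n i : (i <= n)%nat -> strong_rec_table n i = strong_rec i.
Proof.
  induction n as [|n IH]; intros Hi.
  - replace i with O by lia. reflexivity.
  - destruct (Nat.eq_dec i (S n)) as [->|Hne]; [reflexivity|].
    simpl. replace (Nat.leb i n) with true by (symmetry; apply Nat.leb_le; lia).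
    apply IH; lia.
Qed.

Hypothesis F_prefix :
  forall k f g, (forall i, (i < k)%nat -> f i = g i) -> F k f = F k g.

Lemma strong_rec_eq k : strong_rec k = F k strong_rec.
Proof.
  destruct k as [|k]; unfold strong_rec.
  - apply F_prefix. intros; lia.
  - change (strong_rec_table (S k) (S k)) with
      (if Nat.leb (S k) k then strong_rec_table k (S k) else F (S k) (strong_rec_table k)).
    replace (Nat.leb (S k) k) with false by (symmetry; apply Nat.leb_gt; lia).
    apply F_prefix. intros i Hi. apply strong_rec_table_stable. lia.
Qed.

Lemma strong_rec_unique u : (forall k, u k = F k u) -> forall k, u k = strong_rec k.
Proof.
  intros Hu k. induction k as [k IH] using (well_founded_induction Wf_nat.lt_wf).
  rewrite Hu, strong_rec_eq. apply F_prefix. intros; apply IH; auto.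
Qed.

End StrongRecursion.

Lemma pow_le_1 x n : 0 <= x <= 1 -> x ^ n <= 1.
Proof.
  intros H. induction n as [|n IH]; simpl; [lra|].
  assert (0 <= x ^ n) by (apply pow_le; lra). nra.
Qed.

Lemma pow_eq_1 x n : 0 <= x -> x ^ S n = 1 -> x = 1.
Proof.
  intros Hx H. destruct (pow_R1 x (S n) H) as [Habs|]; [|lia].
  rewrite Rabs_pos_eq in Habs; assumption.
Qed.

Lemma sum_f_R0_nonneg f N : (forall i, (i <= N)%nat -> 0 <= f i) -> 0 <= sum_f_R0 f N.
Proof.
  intros Hf. rewrite <- (Rmult_0_l (INR (S N))), <- sum_cte. apply sum_Rle. exact Hf.
Qed.

Lemma sum_f_R0_term_le f n N : (forall i, 0 <= f i) -> (n <= N)%nat -> f n <= sum_f_R0 f N.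
Proof.
  intros Hf HnN. induction HnN as [|N _ IH].
  - destruct n as [|n]; simpl; [lra|].
    assert (0 <= sum_f_R0 f n) by (apply cond_pos_sum; exact Hf). lra.
  - simpl. specialize (Hf (S N)). lra.
Qed.

Lemma sum_f_R0_mono f m n :
  (forall i, 0 <= f i) -> (m <= n)%nat -> sum_f_R0 f m <= sum_f_R0 f n.
Proof.
  intros Hf Hmn. induction Hmn as [|n _ IH]; simpl; [lra|].
  specialize (Hf (S n)). lra.
Qed.

Lemma sum_f_R0_tail_zero f j N : (forall k, (j < k)%nat -> f k = 0) -> (j <= N)%nat ->
  sum_f_R0 f N = sum_f_R0 f j.
Proof.
  intros Hz HjN. induction HjN as [|N HjN IH]; simpl; [reflexivity|].
  rewrite Hz by lia. lra.
Qed.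

Lemma sum_f_R0_swap (f : nat -> nat -> R) n m :
  sum_f_R0 (fun j => sum_f_R0 (f j) m) n = sum_f_R0 (fun k => sum_f_R0 (fun j => f j k) n) m.
Proof.
  induction n as [|n IH]; simpl; [reflexivity|].
  rewrite IH, <- plus_sum. reflexivity.
Qed.

Lemma sum_f_R0_triangle (f : nat -> nat -> R) n :
  sum_f_R0 (fun k => sum_f_R0 (fun j => f j k) k) n =
  sum_f_R0 (fun j => sum_f_R0 (fun l => f j (j + l)%nat) (n - j)) n.
Proof.
  induction n as [|n IH]; [reflexivity|].
  rewrite tech5, IH, (tech5 (fun j => sum_f_R0 (fun l => f j (j + l)%nat) (S n - j)) n).
  rewrite (sum_eq (fun j => sum_f_R0 (fun l => f j (j + l)%nat) (S n - j))
                  (fun j => sum_f_R0 (fun l => f j (j + l)%nat) (n - j) + f j (S n))).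
  - rewrite plus_sum, Nat.sub_diag, tech5. simpl. rewrite Nat.add_0_r. ring.
  - intros i Hi. replace (S n - i)%nat with (S (n - i)) by lia. rewrite tech5.
    replace (i + S (n - i))%nat with (S n) by lia. reflexivity.
Qed.

Section CauchyProduct.

Implicit Types a b c : nat -> R.

Lemma PS_mult_ext a a' b b' n :
  (forall i, a i = a' i) -> (forall i, b i = b' i) -> PS_mult a b n = PS_mult a' b' n.
Proof.
  intros Ha Hb. unfold PS_mult. apply sum_eq. intros i _. rewrite Ha, Hb. reflexivity.
Qed.

Lemma PS_mult_comm a b n : PS_mult a b n = PS_mult b a n.
Proof.
  unfold PS_mult. rewrite <- sum_f_R0_skip. apply sum_eq. intros i Hi.
  replace (n - (n - i))%nat with i by lia. ring.
Qed.

Lemma PS_mult_assoc a b c n :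
  PS_mult (PS_mult a b) c n = PS_mult a (PS_mult b c) n.
Proof.
  unfold PS_mult.
  rewrite (sum_eq _ (fun k => sum_f_R0 (fun j => a j * b (k - j)%nat * c (n - k)%nat) k)).
  2:{ intros i _. rewrite Rmult_comm, scal_sum. apply sum_eq; intros; ring. }
  rewrite (sum_f_R0_triangle (fun j k => a j * b (k - j)%nat * c (n - k)%nat)).
  apply sum_eq. intros j _. rewrite scal_sum. apply sum_eq. intros l _.
  replace (j + l - j)%nat with l by lia.
  replace (n - (j + l))%nat with (n - j - l)%nat by lia. ring.
Qed.

Lemma PS_mult_scal_l x a b n : PS_mult (fun k => x * a k) b n = x * PS_mult a b n.
Proof. unfold PS_mult. rewrite scal_sum. apply sum_eq; intros; ring. Qed.

Lemma PS_mult_scal_r x a b n : PS_mult a (fun k => x * b k) n = x * PS_mult a b n.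
Proof. unfold PS_mult. rewrite scal_sum. apply sum_eq; intros; ring. Qed.

Lemma PS_mult_minus_l a a' b n :
  PS_mult (fun k => a k - a' k) b n = PS_mult a b n - PS_mult a' b n.
Proof. unfold PS_mult. rewrite <- minus_sum. apply sum_eq; intros; ring. Qed.

Lemma PS_mult_S a b n :
  PS_mult a b (S n) = sum_f_R0 (fun j => a j * b (S n - j)%nat) n + a (S n) * b O.
Proof. unfold PS_mult. rewrite tech5, Nat.sub_diag. reflexivity. Qed.

Lemma PS_derive_mult a b k :
  PS_derive (PS_mult a b) k = PS_mult (PS_derive a) b k + PS_mult a (PS_derive b) k.
Proof.
  unfold PS_derive.
  assert (E : INR (S k) * PS_mult a b (S k) =
    sum_f_R0 (fun j => INR j * a j * b (S k - j)%nat) (S k) +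
    sum_f_R0 (fun j => INR (S k - j) * a j * b (S k - j)%nat) (S k)).
  { unfold PS_mult. rewrite <- plus_sum, scal_sum. apply sum_eq. intros i Hi.
    rewrite minus_INR by lia. ring. }
  rewrite E. f_equal.
  - rewrite decomp_sum by lia. simpl pred. unfold PS_mult.
    rewrite !Rmult_0_l, Rplus_0_l. apply sum_eq. intros i _. simpl. ring.
  - rewrite tech5, Nat.sub_diag. simpl INR at 2. rewrite !Rmult_0_l, Rplus_0_r.
    unfold PS_mult. apply sum_eq. intros i Hi.
    replace (S k - i)%nat with (S (k - i)) by lia. ring.
Qed.

Lemma PS_mult_last_only a b n :
  (forall i, (i < n)%nat -> a i = 0) -> PS_mult a b n = a n * b O.
Proof.
  intros Ha. destruct n as [|n]; [unfold PS_mult; simpl; ring|].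
  rewrite PS_mult_S, (sum_eq _ (fun _ => 0)), sum_cte; [ring|].
  intros i Hi. rewrite Ha by lia. ring.
Qed.

End CauchyProduct.

Section FormalPowers.

Variable p : nat -> R.

Definition logderiv_step (k : nat) (r : nat -> R) : R :=
  match k with
  | O => PS_derive p O / p O
  | S m => (PS_derive p (S m) - sum_f_R0 (fun j => r j * p (S m - j)%nat) m) / p O
  end.

Definition logderiv : nat -> R := strong_rec logderiv_step.

(* [fpow p t] is P^t = p_0^t exp(t log(P/p_0)), computed through the linear
   ODE d' = t (P'/P) d, d 0 = 1, satisfied by [fpow_normed p t] = P^t/p_0^t. *)
Definition fpow_normed_step (t : R) (k : nat) (d : nat -> R) : R :=
  match k with
  | O => 1
  | S m => t / INR (S m) * PS_mult logderiv d m
  end.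

Definition fpow_normed (t : R) : nat -> R := strong_rec (fpow_normed_step t).

Definition fpow (t : R) (k : nat) : R := Rpower (p O) t * fpow_normed t k.

Lemma logderiv_step_prefix k f g :
  (forall i, (i < k)%nat -> f i = g i) -> logderiv_step k f = logderiv_step k g.
Proof.
  intros H. destruct k as [|m]; simpl; auto.
  do 2 f_equal. apply sum_eq. intros i Hi. rewrite H by lia. reflexivity.
Qed.

Lemma fpow_normed_step_prefix t k f g :
  (forall i, (i < k)%nat -> f i = g i) -> fpow_normed_step t k f = fpow_normed_step t k g.
Proof.
  intros H. destruct k as [|m]; simpl; auto.
  f_equal. unfold PS_mult. apply sum_eq. intros i Hi. rewrite H by lia. reflexivity.
Qed.

Hypothesis p0_neq0 : p O <> 0.

Lemma PS_mult_logderiv k : PS_mult logderiv p k = PS_derive p k.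
Proof.
  unfold logderiv. destruct k as [|m].
  - unfold PS_mult. simpl. rewrite strong_rec_eq by apply logderiv_step_prefix.
    simpl. field. exact p0_neq0.
  - rewrite PS_mult_S, (strong_rec_eq _ logderiv_step_prefix (S m)).
    simpl. field. exact p0_neq0.
Qed.

Lemma fpow_normed_0 t : fpow_normed t O = 1.
Proof.
  unfold fpow_normed. rewrite strong_rec_eq by apply fpow_normed_step_prefix. reflexivity.
Qed.

Lemma fpow_normed_S t m :
  fpow_normed t (S m) = t / INR (S m) * PS_mult logderiv (fpow_normed t) m.
Proof.
  unfold fpow_normed at 1. rewrite strong_rec_eq by apply fpow_normed_step_prefix.
  reflexivity.
Qed.

Lemma PS_derive_fpow_normed t m :
  PS_derive (fpow_normed t) m = t * PS_mult logderiv (fpow_normed t) m.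
Proof.
  unfold PS_derive. rewrite fpow_normed_S. field. apply not_0_INR. lia.
Qed.

Lemma fpow_normed_unique t u :
  u O = 1 -> (forall m, PS_derive u m = t * PS_mult logderiv u m) ->
  forall k, u k = fpow_normed t k.
Proof.
  intros H0 HD. apply strong_rec_unique; [apply fpow_normed_step_prefix|].
  intros [|m]; unfold fpow_normed_step; auto.
  assert (HS : INR (S m) <> 0) by (apply not_0_INR; lia).
  apply (Rmult_eq_reg_l (INR (S m))); auto.
  specialize (HD m). unfold PS_derive in HD. rewrite HD. field. exact HS.
Qed.

Lemma fpow_normed_add t t' k :
  fpow_normed (t + t') k = PS_mult (fpow_normed t) (fpow_normed t') k.
Proof.
  symmetry. apply (fpow_normed_unique (t + t') (PS_mult (fpow_normed t) (fpow_normed t'))).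
  - unfold PS_mult; simpl. rewrite !fpow_normed_0. ring.
  - intros m. rewrite PS_derive_mult.
    rewrite (PS_mult_ext (PS_derive (fpow_normed t))
               (fun k => t * PS_mult logderiv (fpow_normed t) k) _ (fpow_normed t'))
      by (intros; try apply PS_derive_fpow_normed; reflexivity).
    rewrite (PS_mult_ext (fpow_normed t) (fpow_normed t) (PS_derive (fpow_normed t'))
               (fun k => t' * PS_mult logderiv (fpow_normed t') k))
      by (intros; try apply PS_derive_fpow_normed; reflexivity).
    rewrite PS_mult_scal_l, PS_mult_scal_r, PS_mult_assoc.
    rewrite <- (PS_mult_assoc (fpow_normed t) logderiv).
    rewrite (PS_mult_ext (PS_mult (fpow_normed t) logderiv)
               (PS_mult logderiv (fpow_normed t)) _ _)
      by (intros; try apply PS_mult_comm; reflexivity).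
    rewrite PS_mult_assoc. ring.
Qed.

Lemma fpow_normed_1 k : p k = p O * fpow_normed 1 k.
Proof.
  rewrite <- (fpow_normed_unique 1 (fun k => p k / p O)).
  - field. exact p0_neq0.
  - field. exact p0_neq0.
  - intros m. rewrite Rmult_1_l.
    rewrite (PS_mult_ext _ logderiv _ (fun k => / p O * p k))
      by (intros; unfold Rdiv; try ring; reflexivity).
    rewrite PS_mult_scal_r, PS_mult_logderiv. unfold PS_derive. field. exact p0_neq0.
Qed.

Lemma fpow_add t t' k : PS_mult (fpow t) (fpow t') k = fpow (t + t') k.
Proof.
  unfold fpow. rewrite PS_mult_scal_l, PS_mult_scal_r, fpow_normed_add, Rpower_plus. ring.
Qed.

Lemma fpow_ode t k : PS_mult (PS_derive (fpow t)) p k = t * PS_mult (fpow t) (PS_derive p) k.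
Proof.
  rewrite (PS_mult_ext (PS_derive (fpow t))
             (fun j => (Rpower (p O) t * t) * PS_mult logderiv (fpow_normed t) j) p p)
    by (intros; try reflexivity; unfold fpow, PS_derive; rewrite fpow_normed_S;
        field; apply not_0_INR; lia).
  rewrite (PS_mult_ext (fpow t) (fun j => Rpower (p O) t * fpow_normed t j)
             (PS_derive p) (PS_mult logderiv p))
    by (intros; try reflexivity; symmetry; apply PS_mult_logderiv).
  rewrite !PS_mult_scal_l.
  rewrite (PS_mult_ext (PS_mult logderiv (fpow_normed t))
             (PS_mult (fpow_normed t) logderiv) p p)
    by (intros; try apply PS_mult_comm; reflexivity).
  rewrite PS_mult_assoc. ring.
Qed.

Lemma ode_coef_eq0 t e : e O = 0 ->
  (forall k, PS_mult (PS_derive e) p k = t * PS_mult e (PS_derive p) k) ->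
  forall k, e k = 0.
Proof.
  intros He0 Hode k. induction k as [[|m] IH] using (well_founded_induction Wf_nat.lt_wf);
    [exact He0|].
  specialize (Hode m).
  rewrite PS_mult_last_only in Hode
    by (intros i Hi; unfold PS_derive; rewrite IH by lia; ring).
  rewrite PS_mult_last_only, IH in Hode by (auto; intros; apply IH; lia).
  unfold PS_derive in Hode.
  assert (HS : INR (S m) <> 0) by (apply not_0_INR; lia).
  apply (Rmult_eq_reg_l (INR (S m) * p O)); [lra|apply Rmult_integral_contrapositive; auto].
Qed.

Lemma fpow_ode_unique t u : u O = Rpower (p O) t ->
  (forall k, PS_mult (PS_derive u) p k = t * PS_mult u (PS_derive p) k) ->
  forall k, u k = fpow t k.
Proof.
  intros Hu0 Hode k.
  enough (u k - fpow t k = 0) by lra.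
  apply (ode_coef_eq0 t (fun j => u j - fpow t j)).
  - unfold fpow. rewrite fpow_normed_0. lra.
  - intros j.
    rewrite (PS_mult_ext (PS_derive (fun j => u j - fpow t j))
               (fun i => PS_derive u i - PS_derive (fpow t) i) p p)
      by (intros; unfold PS_derive; try ring; reflexivity).
    rewrite !PS_mult_minus_l, Hode, fpow_ode. ring.
Qed.

End FormalPowers.

Lemma fpow_1 p k : 0 < p O -> fpow p 1 k = p k.
Proof.
  intros H. unfold fpow. rewrite Rpower_1 by exact H. symmetry.
  apply fpow_normed_1. lra.
Qed.

Section LogDerivNonneg.

Variable p : nat -> R.
Let r := logderiv p.
Let D := fpow_normed p.

Lemma fpow_normed_bounds k t : (forall j, (j < k)%nat -> 0 <= r j) -> 0 <= t <= 1 ->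
  forall m, (m <= k)%nat ->
  0 <= D t m <= D 1 m /\ ((1 <= m)%nat -> D t m <= t * D 1 m).
Proof.
  intros Hr Ht m. induction m as [[|m] IH] using (well_founded_induction Wf_nat.lt_wf);
    intros Hm.
  - unfold D. rewrite !fpow_normed_0. split; [lra|lia].
  - assert (HX : 0 <= PS_mult r (D t) m <= PS_mult r (D 1) m).
    { unfold PS_mult. split.
      - apply sum_f_R0_nonneg. intros i Hi. apply Rmult_le_pos; [apply Hr; lia|].
        apply (IH (m - i)%nat); lia.
      - apply sum_Rle. intros i Hi. apply Rmult_le_compat_l; [apply Hr; lia|].
        apply (IH (m - i)%nat); lia. }
    unfold D. rewrite !fpow_normed_S. fold r D.
    assert (Hc : 0 < / INR (S m)) by (apply Rinv_0_lt_compat, lt_0_INR; lia).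
    set (c := / INR (S m)) in *. unfold Rdiv. fold c.
    assert (0 <= c * PS_mult r (D t) m <= c * PS_mult r (D 1) m) by (split; nra).
    split; [split|]; intros; nra.
Qed.

Lemma PS_mult_logderiv_fpow_normed_le k t :
  (forall j, (j < k)%nat -> 0 <= r j) -> 0 <= t <= 1 ->
  PS_mult r (D t) k <= (1 - t) * r k + t * PS_mult r (D 1) k.
Proof.
  intros Hr Ht. destruct k as [|k].
  - unfold PS_mult, D; simpl. rewrite !fpow_normed_0. lra.
  - rewrite !PS_mult_S. unfold D; rewrite !fpow_normed_0; fold D.
    assert (sum_f_R0 (fun j => r j * D t (S k - j)%nat) k <=
            t * sum_f_R0 (fun j => r j * D 1 (S k - j)%nat) k).
    { rewrite scal_sum. apply sum_Rle. intros i Hi.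
      destruct (fpow_normed_bounds (S k) t Hr Ht (S k - i)) as [_ Hle]; [lia|].
      specialize (Hle ltac:(lia)). assert (0 <= r i) by (apply Hr; lia). nra. }
    lra.
Qed.

Lemma logderiv_nonneg :
  (forall eps, 0 < eps -> exists t, 0 < t < eps /\ forall k, 0 <= fpow p t k) ->
  forall k, 0 <= r k.
Proof.
  intros Hsmall k. induction k as [k IH] using (well_founded_induction Wf_nat.lt_wf).
  destruct (Rle_or_lt 0 (r k)) as [|Hneg]; [assumption|exfalso].
  (* For small t the coefficient of s^(k+1) in P^t would be negative. *)
  set (M := PS_mult r (D 1) k).
  assert (HM : M <= Rabs M) by apply Rle_abs.
  assert (Hpos : 0 < Rabs M - r k) by (pose proof (Rabs_pos M); lra).
  destruct (Hsmall (- r k / (Rabs M - r k))) as [t [[Ht0 Hteps] Hfpow]].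
  { apply Rdiv_lt_0_compat; lra. }
  assert (HDt : forall j, 0 <= D t j).
  { intros j. specialize (Hfpow j). unfold fpow in Hfpow. fold D in Hfpow.
    assert (0 < Rpower (p O) t) by apply exp_pos. nra. }
  assert (Hsmallt : t * (Rabs M - r k) < - r k).
  { apply (Rmult_lt_compat_r (Rabs M - r k)) in Hteps; [|exact Hpos].
    unfold Rdiv in Hteps. rewrite Rmult_assoc, Rinv_l, Rmult_1_r in Hteps by lra.
    exact Hteps. }
  assert (Ht1 : t <= 1) by (pose proof (Rabs_pos M); nra).
  assert (Hle := PS_mult_logderiv_fpow_normed_le k t IH ltac:(lra)). fold M in Hle.
  assert (HSk := HDt (S k)). unfold D in HSk. rewrite fpow_normed_S in HSk. fold r D in HSk.
  assert (Hc : 0 < t / INR (S k)) by (apply Rdiv_lt_0_compat; [lra|apply lt_0_INR; lia]).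
  assert (0 <= PS_mult r (D t) k).
  { apply (Rmult_le_reg_l (t / INR (S k))); lra. }
  nra.
Qed.

End LogDerivNonneg.

Lemma fpow_normed_nonneg p t k :
  0 <= t -> (forall j, 0 <= logderiv p j) -> 0 <= fpow_normed p t k.
Proof.
  intros Ht Hr. induction k as [[|m] IH] using (well_founded_induction Wf_nat.lt_wf).
  - rewrite fpow_normed_0. lra.
  - rewrite fpow_normed_S. apply Rmult_le_pos.
    + apply Rdiv_le_0_compat; [lra|apply lt_0_INR; lia].
    + apply sum_f_R0_nonneg. intros i Hi. apply Rmult_le_pos; [apply Hr|apply IH; lia].
Qed.

Lemma fpow_nonneg p t k :
  0 <= t -> (forall j, 0 <= logderiv p j) -> 0 <= fpow p t k.
Proof.
  intros Ht Hr. unfold fpow. apply Rmult_le_pos.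
  - left. apply exp_pos.
  - apply fpow_normed_nonneg; assumption.
Qed.

Lemma pgf_PSeries u s : pgf u s = PSeries u s.
Proof. unfold pgf, PSeries. apply Series_ext. reflexivity. Qed.

Lemma pgf_0 u : pgf u 0 = u O.
Proof. rewrite pgf_PSeries. apply PSeries_0. Qed.

Lemma pgf_ext u v s : (forall k, u k = v k) -> pgf u s = pgf v s.
Proof. intros H. unfold pgf. apply Series_ext. intros k. rewrite H. reflexivity. Qed.

Lemma ex_series_pgf u s : pmf_I0 u -> 0 <= s <= 1 -> ex_series (fun n => u n * s ^ n).
Proof.
  intros [Hu Hs] Hs01. apply (@ex_series_le R_AbsRing R_CompleteNormedModule _ u).
  - intros n. change (norm (u n * s ^ n)) with (Rabs (u n * s ^ n)).
    assert (0 <= s ^ n <= 1) by (split; [apply pow_le|apply pow_le_1]; lra).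
    rewrite Rabs_pos_eq by (apply Rmult_le_pos; [apply Hu|lra]).
    specialize (Hu n). nra.
  - exists 1. exact Hs.
Qed.

Lemma is_series_pgf u s : pmf_I0 u -> 0 <= s <= 1 -> is_series (fun n => u n * s ^ n) (pgf u s).
Proof. intros Hu Hs. apply Series_correct, ex_series_pgf; assumption. Qed.

Lemma pgf_1 u : pmf_I0 u -> pgf u 1 = 1.
Proof.
  intros [_ Hs]. unfold pgf. rewrite (Series_ext _ u) by (intros n; rewrite pow1; ring).
  apply is_series_unique. exact Hs.
Qed.

Lemma sum_f_R0_le_is_series a l n :
  (forall k, 0 <= a k) -> is_series a l -> sum_f_R0 a n <= l.
Proof.
  intros Ha Hl. rewrite <- sum_n_Reals. apply (is_lim_seq_incr_compare (sum_n a) l Hl).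
  intros m. rewrite sum_Sn. unfold plus; simpl. specialize (Ha (S m)). lra.
Qed.

Lemma coef0_le_pgf u s : (forall k, 0 <= u k) -> 0 <= s ->
  ex_series (fun k => u k * s ^ k) -> u O <= pgf u s.
Proof.
  intros Hu Hs He. replace (u O) with (sum_f_R0 (fun k => u k * s ^ k) 0) by (simpl; ring).
  apply sum_f_R0_le_is_series; [|apply Series_correct; exact He].
  intros k. apply Rmult_le_pos; [apply Hu|apply pow_le; exact Hs].
Qed.

Lemma pgf_pos u s : pmf_I0 u -> 0 < u O -> 0 <= s <= 1 -> 0 < pgf u s.
Proof.
  intros Hu Hu0 Hs. eapply Rlt_le_trans; [exact Hu0|].
  apply coef0_le_pgf; [apply Hu|lra|apply ex_series_pgf; assumption].
Qed.

Lemma CV_radius_ge_1 w :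
  (forall x, 0 <= x < 1 -> ex_pseries w x) -> Rbar_le 1 (CV_radius w).
Proof.
  intros Hex. apply Rbar_not_lt_le. intros Hlt.
  pose proof (CV_radius_ge_0 w) as H0.
  destruct (CV_radius w) as [l| |] eqn:E; simpl in Hlt, H0; try contradiction.
  apply (CV_disk_outside w ((l + 1) / 2)).
  - rewrite E, Rabs_pos_eq by lra. simpl. lra.
  - apply ex_series_lim_0, ex_pseries_R, Hex. lra.
Qed.

Lemma CV_radius_pmf u : pmf_I0 u -> Rbar_le 1 (CV_radius u).
Proof.
  intros Hu. apply CV_radius_ge_1. intros x Hx.
  apply ex_pseries_R, ex_series_pgf; [exact Hu|lra].
Qed.

Lemma Rbar_lt_CV_radius u x :
  Rbar_le 1 (CV_radius u) -> 0 <= x < 1 -> Rbar_lt (Rabs x) (CV_radius u).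
Proof.
  intros H Hx. eapply Rbar_lt_le_trans; [|exact H]. simpl. rewrite Rabs_pos_eq; lra.
Qed.

Lemma continuity_pt_eq0_right f :
  continuity_pt f 0 -> (forall x, 0 < x < 1 -> f x = 0) -> f 0 = 0.
Proof.
  intros Hc Hz. destruct (Req_dec (f 0) 0) as [|Hne]; [assumption|exfalso].
  destruct (Hc (Rabs (f 0)) (Rabs_pos_lt _ Hne)) as [d [Hd Hx]].
  set (x := Rmin (d / 2) (1 / 2)).
  assert (Hx0 : 0 < x) by (apply Rmin_pos; lra).
  assert (x <= d / 2) by apply Rmin_l. assert (x <= 1 / 2) by apply Rmin_r.
  specialize (Hx x). simpl in Hx. unfold R_dist in Hx. rewrite Hz in Hx by lra.
  rewrite Rminus_0_r, Rminus_0_l, Rabs_Ropp, Rabs_pos_eq in Hx by lra.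
  assert (Rabs (f 0) < Rabs (f 0)) by (apply Hx; split; [split; [exact I|lra]|lra]).
  lra.
Qed.

Lemma PSeries_eq0_coef0 w : Rbar_le 1 (CV_radius w) ->
  (forall x, 0 < x < 1 -> PSeries w x = 0) -> w O = 0.
Proof.
  intros Hr Hz. rewrite <- PSeries_0. apply continuity_pt_eq0_right; [|exact Hz].
  apply PSeries_continuity, Rbar_lt_CV_radius; [exact Hr|lra].
Qed.

Lemma PSeries_eq0_coef w : Rbar_le 1 (CV_radius w) ->
  (forall x, 0 < x < 1 -> PSeries w x = 0) -> forall k, w k = 0.
Proof.
  intros Hr Hz k. revert w Hr Hz. induction k as [|k IH]; intros w Hr Hz.
  - apply PSeries_eq0_coef0; assumption.
  - change (w (S k)) with (PS_decr_1 w k). apply IH.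
    + rewrite CV_radius_decr_1. exact Hr.
    + intros x Hx. apply (Rmult_eq_reg_l x); [|lra].
      pose proof (PSeries_eq0_coef0 w Hr Hz) as H0. specialize (Hz x Hx).
      rewrite PSeries_decr_1, H0 in Hz
        by (apply CV_radius_inside, Rbar_lt_CV_radius; [exact Hr|lra]).
      lra.
Qed.

Lemma is_derive_Rpower_comp f x df t : 0 < f x -> is_derive f x df ->
  is_derive (fun y => Rpower (f y) t) x (t * Rpower (f x) (t - 1) * df).
Proof.
  intros Hf Hd.
  replace (t * Rpower (f x) (t - 1) * df) with (scal df (t * Rpower (f x) (t - 1)))
    by (unfold scal; simpl; unfold mult; simpl; ring).
  apply (is_derive_comp (fun z => Rpower z t)); [|exact Hd].
  apply is_derive_Reals, derivable_pt_lim_power. exact Hf.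
Qed.

Lemma PSeries_Rpower_deriv_eq p g t x :
  Rbar_le 1 (CV_radius p) -> Rbar_le 1 (CV_radius g) -> 0 < x < 1 ->
  (forall y, 0 < y < 1 -> 0 < PSeries p y /\ PSeries g y = Rpower (PSeries p y) t) ->
  PSeries (PS_derive g) x * PSeries p x = t * (PSeries g x * PSeries (PS_derive p) x).
Proof.
  intros Rp Rg Hx Hgp. destruct (Hgp x Hx) as [HPx HG].
  assert (Hloc : locally x (fun y => Rpower (PSeries p y) t = PSeries g y)).
  { apply (filter_imp (fun y : R => 0 < y /\ y < 1)).
    - intros y Hy. symmetry. apply Hgp. exact Hy.
    - apply (open_and _ _ (open_gt 0) (open_lt 1)). exact Hx. }
  assert (Hd := is_derive_Rpower_comp (PSeries p) x _ t HPx
                  (is_derive_PSeries p x (Rbar_lt_CV_radius p x Rp ltac:(lra)))).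
  apply (is_derive_ext_loc _ _ _ _ Hloc), is_derive_unique in Hd.
  rewrite Derive_PSeries in Hd by (apply Rbar_lt_CV_radius; [assumption|lra]).
  assert (Hpow : Rpower (PSeries p x) t = Rpower (PSeries p x) (t - 1) * PSeries p x).
  { rewrite <- (Rpower_1 (PSeries p x)) at 3 by exact HPx.
    rewrite <- Rpower_plus. f_equal. ring. }
  rewrite Hd, HG, Hpow. ring.
Qed.

Lemma fpow_eq_of_pgf_Rpower p g t : pmf_I0 p -> pmf_I0 g -> 0 < p O ->
  (forall s, 0 <= s <= 1 -> pgf g s = Rpower (pgf p s) t) ->
  forall k, g k = fpow p t k.
Proof.
  intros Hp Hg Hp0 Hgp.
  assert (Rp := CV_radius_pmf p Hp). assert (Rg := CV_radius_pmf g Hg).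
  assert (Rdp : Rbar_le 1 (CV_radius (PS_derive p))) by (rewrite CV_radius_derive; exact Rp).
  assert (Rdg : Rbar_le 1 (CV_radius (PS_derive g))) by (rewrite CV_radius_derive; exact Rg).
  apply fpow_ode_unique; [lra| |].
  { rewrite <- !pgf_0. apply Hgp. lra. }
  intros k.
  set (u := PS_mult (PS_derive g) p). set (v := PS_mult g (PS_derive p)).
  assert (Hu : forall x, 0 <= x < 1 -> ex_pseries u x)
    by (intros; apply ex_pseries_mult; apply Rbar_lt_CV_radius; assumption).
  assert (Hsv : forall x, 0 <= x < 1 -> ex_pseries (PS_scal (- t) v) x).
  { intros. apply ex_pseries_scal; [unfold mult; simpl; ring|].
    apply ex_pseries_mult; apply Rbar_lt_CV_radius; assumption. }
  assert (Hw : PS_plus u (PS_scal (- t) v) k = 0).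
  { apply PSeries_eq0_coef.
    - apply CV_radius_ge_1. intros x Hx. apply ex_pseries_plus; auto.
    - intros x Hx.
      rewrite PSeries_plus, PSeries_scal by (first [apply Hu | apply Hsv]; lra).
      unfold u, v. rewrite !PSeries_mult by (apply Rbar_lt_CV_radius; [assumption|lra]).
      rewrite (PSeries_Rpower_deriv_eq p g t x); try assumption; [ring|].
      intros y Hy. rewrite <- !pgf_PSeries.
      split; [apply pgf_pos|apply Hgp]; auto; lra. }
  unfold PS_plus, PS_scal, plus, scal in Hw; simpl in Hw. unfold mult in Hw; simpl in Hw.
  unfold u, v in *. lra.
Qed.

Lemma is_series_swap_triangular (A : nat -> nat -> R) l :
  (forall j k, 0 <= A j k) -> (forall j k, (j < k)%nat -> A j k = 0) ->
  is_series (fun j => sum_f_R0 (A j) j) l ->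
  (forall k, ex_series (fun j => A j k)) /\ is_series (fun k => Series (fun j => A j k)) l.
Proof.
  intros Hpos Hz HS.
  set (row := fun j => sum_f_R0 (A j) j).
  assert (Hrow : forall j N, sum_f_R0 (A j) N <= row j).
  { intros j N. unfold row. destruct (Compare_dec.le_lt_dec N j).
    - apply sum_f_R0_mono; auto.
    - rewrite (sum_f_R0_tail_zero _ j N); [lra| |lia]. intros; apply Hz; assumption. }
  assert (Hcol : forall k, ex_series (fun j => A j k)).
  { intros k. apply (@ex_series_le R_AbsRing R_CompleteNormedModule _ row).
    - intros j. change (norm (A j k)) with (Rabs (A j k)). rewrite Rabs_pos_eq by auto.
      eapply Rle_trans; [|apply (Hrow j k)]. apply sum_f_R0_term_le; auto.
    - exists l. exact HS. }
  split; [exact Hcol|].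
  set (col := fun k => Series (fun j => A j k)).
  assert (Hcols : forall N, is_series (fun j => sum_f_R0 (A j) N) (sum_f_R0 col N)).
  { induction N as [|N IH]; simpl.
    - apply Series_correct, Hcol.
    - apply (is_series_plus _ _ _ _ IH (Series_correct _ (Hcol (S N)))). }
  assert (Hup : forall N, sum_f_R0 col N <= l).
  { intros N. rewrite <- (is_series_unique _ _ (Hcols N)), <- (is_series_unique _ _ HS).
    apply Series_le; [|exists l; exact HS].
    intros j. split; [apply cond_pos_sum; auto|apply Hrow]. }
  assert (Hlow : forall N, sum_f_R0 row N <= sum_f_R0 col N).
  { intros N. rewrite (sum_eq row (fun j => sum_f_R0 (A j) N)).
    - rewrite sum_f_R0_swap. apply sum_Rle. intros k _.
      apply sum_f_R0_le_is_series; auto. apply Series_correct, Hcol.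
    - intros j Hj. unfold row. symmetry. apply sum_f_R0_tail_zero; auto. }
  enough (HL : is_lim_seq (sum_n col) l) by exact HL.
  apply (is_lim_seq_le_le (sum_n row) (sum_n col) (fun _ => l));
    [|exact HS|apply is_lim_seq_const].
  intros N. rewrite !sum_n_Reals. split; auto.
Qed.

Lemma binomial_C_nonneg n k : 0 <= Binomial.C n k.
Proof.
  unfold Binomial.C. apply Rmult_le_pos; [apply pos_INR|].
  left. apply Rinv_0_lt_compat, Rmult_lt_0_compat; apply INR_fact_lt_0.
Qed.

Lemma pgf_thinning p beta : pmf_I0 p -> 0 <= beta <= 1 ->
  exists q, pmf_I0 q /\ forall s, 0 <= s <= 1 -> pgf q s = pgf p (1 - beta + beta * s).
Proof.
  intros Hp Hb.
  set (B := fun j k => if Nat.leb k j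
             then p j * Binomial.C j k * beta ^ k * (1 - beta) ^ (j - k) else 0).
  assert (HB : forall j k, 0 <= B j k).
  { intros j k. unfold B. destruct (Nat.leb k j); [|lra].
    assert (0 <= p j) by apply Hp. assert (0 <= Binomial.C j k) by apply binomial_C_nonneg.
    assert (0 <= beta ^ k) by (apply pow_le; lra).
    assert (0 <= (1 - beta) ^ (j - k)) by (apply pow_le; lra).
    apply Rmult_le_pos; [apply Rmult_le_pos; [apply Rmult_le_pos|]|]; assumption. }
  assert (Hswap : forall s, 0 <= s <= 1 ->
     (forall k, ex_series (fun j => B j k * s ^ k)) /\
     is_series (fun k => Series (fun j => B j k * s ^ k)) (pgf p (1 - beta + beta * s))).
  { intros s Hs. apply is_series_swap_triangular.
    - intros; apply Rmult_le_pos; [apply HB|apply pow_le; lra].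
    - intros j k Hjk. unfold B. replace (Nat.leb k j) with false
        by (symmetry; apply Nat.leb_gt; lia). ring.
    - apply (is_series_ext (fun n => p n * (1 - beta + beta * s) ^ n)).
      + intros j. replace (1 - beta + beta * s) with (beta * s + (1 - beta)) by ring.
        rewrite binomial, scal_sum. apply sum_eq. intros i Hi. unfold B.
        replace (Nat.leb i j) with true by (symmetry; apply Nat.leb_le; lia).
        rewrite Rpow_mult_distr. ring.
      + apply is_series_pgf; [exact Hp|nra]. }
  set (q := fun k => Series (fun j => B j k)).
  assert (Hq : forall s, 0 <= s <= 1 ->
             is_series (fun k => q k * s ^ k) (pgf p (1 - beta + beta * s))).
  { intros s Hs. destruct (Hswap s Hs) as [_ H]. eapply is_series_ext; [|exact H].
    intros k. unfold q. apply Series_scal_r. }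
  assert (Hcol : forall k, ex_series (fun j => B j k)).
  { intros k. destruct (Hswap 1 ltac:(lra)) as [H _].
    eapply ex_series_ext; [|exact (H k)]. intros j. simpl. rewrite pow1. ring. }
  exists q. split; [split|].
  - intros k. apply Rle_trans with (sum_f_R0 (fun j => B j k) 0); [apply HB|].
    apply sum_f_R0_le_is_series; [auto|apply Series_correct, Hcol].
  - specialize (Hq 1 ltac:(lra)). replace (1 - beta + beta * 1) with 1 in Hq by ring.
    rewrite pgf_1 in Hq by exact Hp. eapply is_series_ext; [|exact Hq].
    intros k. simpl. rewrite pow1. ring.
  - intros s Hs. apply is_series_unique, Hq, Hs.
Qed.

Lemma is_series_pgf_mult u v s : (forall k, 0 <= u k) -> (forall k, 0 <= v k) -> 0 <= s ->
  ex_series (fun k => u k * s ^ k) -> ex_series (fun k => v k * s ^ k) ->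
  is_series (fun k => PS_mult u v k * s ^ k) (pgf u s * pgf v s).
Proof.
  intros Hu Hv Hs Eu Ev.
  apply (is_series_ext
           (fun k => sum_f_R0 (fun j => u j * s ^ j * (v (k - j)%nat * s ^ (k - j))) k)).
  - intros k. unfold PS_mult. rewrite Rmult_comm, scal_sum. apply sum_eq. intros j Hj.
    replace (s ^ k) with (s ^ j * s ^ (k - j)) by (rewrite <- pow_add; f_equal; lia). ring.
  - apply (is_series_mult_pos (fun k => u k * s ^ k) (fun k => v k * s ^ k));
      try (apply Series_correct; assumption);
      intros; apply Rmult_le_pos; auto; apply pow_le; exact Hs.
Qed.

Lemma ex_series_PS_mult_factor u v s :
  (forall k, 0 <= u k) -> (forall k, 0 <= v k) -> 0 < v O -> 0 <= s ->
  ex_series (fun k => PS_mult u v k * s ^ k) -> ex_series (fun k => u k * s ^ k).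
Proof.
  intros Hu Hv Hv0 Hs Hex.
  apply (@ex_series_le R_AbsRing R_CompleteNormedModule _
           (fun k => PS_mult u v k * s ^ k * / v O)); [|apply ex_series_scal_r, Hex].
  intros k. change (norm (u k * s ^ k)) with (Rabs (u k * s ^ k)).
  assert (Hsk : 0 <= s ^ k) by (apply pow_le; exact Hs).
  rewrite Rabs_pos_eq by (apply Rmult_le_pos; auto).
  assert (Hk : u k * v O <= PS_mult u v k).
  { pose proof (sum_f_R0_term_le (fun j => u j * v (k - j)%nat) k k) as H.
    cbv beta in H. rewrite Nat.sub_diag in H. apply H; [intros; apply Rmult_le_pos; auto|lia]. }
  rewrite Rmult_assoc, (Rmult_comm (s ^ k)), <- Rmult_assoc.
  apply Rmult_le_compat_r; [exact Hsk|].
  apply (Rmult_le_reg_r (v O)); [exact Hv0|].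
  rewrite Rmult_assoc, Rinv_l, Rmult_1_r by lra. exact Hk.
Qed.

Section FpowGeneratingFunctions.

Variable p : nat -> R.
Hypothesis Hp : pmf_I0 p.
Hypothesis Hp0 : 0 < p O.
Hypothesis Hr : forall k, 0 <= logderiv p k.

Lemma ex_series_fpow t s : 0 <= t <= 1 -> 0 <= s <= 1 ->
  ex_series (fun k => fpow p t k * s ^ k).
Proof.
  intros Ht Hs. apply (ex_series_PS_mult_factor _ (fpow p (1 - t))).
  - intros k. apply fpow_nonneg; [lra|exact Hr].
  - intros k. apply fpow_nonneg; [lra|exact Hr].
  - unfold fpow. rewrite fpow_normed_0, Rmult_1_r. apply exp_pos.
  - lra.
  - eapply ex_series_ext; [|apply (ex_series_pgf p s Hp Hs)].
    intros k. rewrite fpow_add, Rplus_minus, fpow_1 by exact Hp0. reflexivity.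
Qed.

Lemma pgf_fpow_add t t' s : 0 <= t -> 0 <= t' -> t + t' <= 1 -> 0 <= s <= 1 ->
  pgf (fpow p t) s * pgf (fpow p t') s = pgf (fpow p (t + t')) s.
Proof.
  intros Ht Ht' Htt' Hs. symmetry. apply is_series_unique.
  apply (is_series_ext (fun k => PS_mult (fpow p t) (fpow p t') k * s ^ k));
    [intros k; rewrite fpow_add; reflexivity|].
  apply is_series_pgf_mult; try (intros; apply fpow_nonneg; [lra|exact Hr]); try lra;
    apply ex_series_fpow; lra.
Qed.

Lemma pgf_fpow_pow n u s : 0 <= u -> INR (S n) * u <= 1 -> 0 <= s <= 1 ->
  pgf (fpow p u) s ^ S n = pgf (fpow p (INR (S n) * u)) s.
Proof.
  intros Hu Hnu Hs. induction n as [|n IH].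
  - simpl. rewrite Rmult_1_r, Rmult_1_l. reflexivity.
  - rewrite (S_INR (S n)) in Hnu.
    assert (0 <= INR (S n) * u) by (apply Rmult_le_pos; [apply pos_INR|exact Hu]).
    rewrite <- tech_pow_Rmult, IH, pgf_fpow_add by lra.
    f_equal. f_equal. rewrite (S_INR (S n)). ring.
Qed.

Lemma pmf_fpow t : 0 <= t <= 1 -> pgf (fpow p t) 1 = 1 -> pmf_I0 (fpow p t).
Proof.
  intros Ht H1. split; [intros; apply fpow_nonneg; [lra|exact Hr]|].
  assert (H := Series_correct _ (ex_series_fpow t 1 Ht ltac:(lra))).
  unfold pgf in H1. rewrite H1 in H. eapply is_series_ext; [|exact H].
  intros k. cbv beta. rewrite pow1. apply Rmult_1_r.
Qed.

Lemma inf_div_fpow t : 0 <= t <= 1 -> pgf (fpow p t) 1 = 1 -> inf_div_pmf (fpow p t).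
Proof.
  intros Ht H1. split; [apply pmf_fpow; assumption|].
  intros [|m] Hm; [lia|]. exists (fpow p (t / INR (S m))).
  assert (HS : 1 <= INR (S m)) by (rewrite S_INR; pose proof (pos_INR m); lra).
  assert (Hu : 0 <= t / INR (S m)) by (apply Rdiv_le_0_compat; lra).
  assert (Heq : INR (S m) * (t / INR (S m)) = t) by (field; lra).
  assert (Hu1 : t / INR (S m) <= 1) by nra.
  assert (Hpow : forall s, 0 <= s <= 1 ->
            pgf (fpow p (t / INR (S m))) s ^ S m = pgf (fpow p t) s)
    by (intros; rewrite pgf_fpow_pow, Heq; auto; lra).
  split; [|exact Hpow].
  apply pmf_fpow; [lra|]. apply (pow_eq_1 _ m).
  - apply (Rle_trans _ (fpow p (t / INR (S m)) O)); [apply fpow_nonneg; auto|].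
    apply coef0_le_pgf; [intros; apply fpow_nonneg; auto|lra|apply ex_series_fpow; lra].
  - rewrite Hpow, H1 by lra. reflexivity.
Qed.

End FpowGeneratingFunctions.

Section SemiStable.

Variables (a b : R) (p : nat -> R).
Hypothesis Ha : 0 < a < 1.
Hypothesis Hb : 0 < b < 1.
Hypothesis Hp : pmf_I0 p.
Hypothesis Hss : forall s, 0 <= s <= 1 ->
  pgf p s <> 0 /\ Rpower (pgf p s) a = pgf p (1 - b + b * s).

Lemma semi_stable_p0_pos : 0 < p O.
Proof.
  destruct (Hss 0) as [Hne _]; [lra|]. rewrite pgf_0 in Hne.
  destruct Hp as [Hnonneg _]. specialize (Hnonneg O). lra.
Qed.

Lemma semi_stable_iter n s : 0 <= s <= 1 ->
  pgf p (1 - b ^ n + b ^ n * s) = Rpower (pgf p s) (a ^ n).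
Proof.
  revert s. induction n as [|n IH]; intros s Hs.
  - simpl. replace (1 - 1 + 1 * s) with s by ring.
    rewrite Rpower_1; [reflexivity|apply pgf_pos; auto using semi_stable_p0_pos].
  - assert (0 <= b ^ n <= 1) by (split; [apply pow_le|apply pow_le_1]; lra).
    set (y := 1 - b ^ n + b ^ n * s).
    assert (Hy : 0 <= y <= 1) by (unfold y; nra).
    replace (1 - b ^ S n + b ^ S n * s) with (1 - b + b * y) by (unfold y; simpl; ring).
    destruct (Hss y Hy) as [_ <-]. unfold y. rewrite IH, Rpower_mult by exact Hs.
    f_equal. simpl. ring.
Qed.

Lemma semi_stable_fpow n :
  (forall k, 0 <= fpow p (a ^ n) k) /\
  forall s, 0 <= s <= 1 -> pgf (fpow p (a ^ n)) s = pgf p (1 - b ^ n + b ^ n * s).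
Proof.
  destruct (pgf_thinning p (b ^ n) Hp) as [q [Hq Hqs]].
  { split; [apply pow_le|apply pow_le_1]; lra. }
  assert (E : forall k, q k = fpow p (a ^ n) k).
  { apply fpow_eq_of_pgf_Rpower; auto using semi_stable_p0_pos.
    intros s Hs. rewrite Hqs, semi_stable_iter by exact Hs. reflexivity. }
  split.
  - intros k. rewrite <- E. apply Hq.
  - intros s Hs. rewrite <- Hqs by exact Hs. symmetry. apply pgf_ext, E.
Qed.

Lemma semi_stable_logderiv_nonneg k : 0 <= logderiv p k.
Proof.
  apply logderiv_nonneg. intros eps Heps.
  destruct (pow_lt_1_zero a ltac:(rewrite Rabs_pos_eq; lra) eps Heps) as [N HN].
  exists (a ^ N). split; [split|].
  - apply pow_lt. lra.
  - specialize (HN N (le_n N)). rewrite Rabs_pos_eq in HN by (apply pow_le; lra). exact HN.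
  - apply semi_stable_fpow.
Qed.

Lemma semi_stable_selfdecomp : disc_semi_selfdecomp b p.
Proof.
  assert (Hp0 := semi_stable_p0_pos).
  assert (Hr := semi_stable_logderiv_nonneg).
  assert (Hsplit : forall s, 0 <= s <= 1 ->
            pgf p s = pgf p (1 - b + b * s) * pgf (fpow p (1 - a)) s).
  { intros s Hs. destruct (semi_stable_fpow 1) as [_ Hfa]. rewrite !pow_1 in Hfa.
    rewrite <- Hfa, pgf_fpow_add, Rplus_minus by (auto; lra).
    symmetry. apply pgf_ext. intros k. apply fpow_1, Hp0. }
  split; [exact Hp|]. exists (fpow p (1 - a)). split; [|exact Hsplit].
  apply inf_div_fpow; auto; [lra|].
  specialize (Hsplit 1 ltac:(lra)).
  replace (1 - b + b * 1) with 1 in Hsplit by ring. rewrite pgf_1 in Hsplit by exact Hp. lra.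
Qed.

End SemiStable.

Lemma Rpower_lt_1 x y : 0 < x < 1 -> 0 < y -> 0 < Rpower x y < 1.
Proof.
  intros Hx Hy. split; [apply exp_pos|].
  unfold Rpower. rewrite <- exp_0. apply exp_increasing.
  assert (ln x < 0) by (rewrite <- ln_1; apply ln_increasing; lra). nra.
Qed.

Theorem theorem2p3 (b alpha a : R) (p : nat -> R) :
  0 < b < 1 -> 0 < alpha <= 1 -> a = Rpower b alpha ->
  disc_semi_stable a b p -> disc_semi_selfdecomp b p.
Proof.
  intros Hb Halpha Ha [Hp Hss].
  apply (semi_stable_selfdecomp a); try assumption.
  rewrite Ha. apply Rpower_lt_1; [exact Hb|apply Halpha].
Qed.
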